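(* BCP does not hold on $\mathbb H$ for the box-distance $d_\infty(p,q)=\|p^{-1}\cdot q\|_\infty$, where $\|(x,y,z)\|_\infty=\max\big((x^2+y^2)^{1/2},\,2|z|^{1/2}\big)$.
   Context: $\mathbb H=\mathbb R^3$ with group law $(x,y,z)\cdot(x',y',z')=(x+x',y+y',z+z'+\tfrac12(xy'-yx'))$; $d_\infty$ is a homogeneous (left invariant, dilation-homogeneous, topology-inducing) distance. BCP holds for $d$ if there is $N\geq1$ such that for every bounded $A$ and every family $\mathcal B$ of closed balls with each point of $A$ the center of some ball of $\mathcal B$, some subfamily $\mathcal F\subset\mathcal B$ satisfies $\chi_A\le\sum_{B\in\mathcal F}\chi_B\le N$. *)

From Stdlib Require Import Reals List.
Open Scope R_scope.

Definition H : Type := (R * R * R)%type.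

Definition hmul (p q : H) : H :=
  match p, q with
  | (x, y, z), (x', y', z') =>
      (x + x', y + y', z + z' + / 2 * (x * y' - y * x'))
  end.

Definition hinv (p : H) : H :=
  match p with (x, y, z) => (- x, - y, - z) end.

Definition boxnorm (p : H) : R :=
  match p with (x, y, z) => Rmax (sqrt (x ^ 2 + y ^ 2)) (2 * sqrt (Rabs z)) end.

Definition dinf (p q : H) : R := boxnorm (hmul (hinv p) q).

Definition cball (d : H -> H -> R) (c : H) (r : R) : H -> Prop :=
  fun q => d c q <= r.

Definition is_cball (d : H -> H -> R) (B : H -> Prop) : Prop :=
  exists c r, 0 < r /\ B = cball d c r.

Definition bounded (d : H -> H -> R) (A : H -> Prop) : Prop :=
  exists c M, forall a, A a -> d c a <= M.

(* Besicovitch covering property: there is N >= 1 such that for every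
   bounded A and every family Bf of closed balls such that every point of A
   is the center of some ball of Bf, there is a subfamily F of Bf with
   chi_A <= sum_{B in F} chi_B <= N, i.e. F covers A and every point
   belongs to at most N (distinct) balls of F. *)
Definition BCP (d : H -> H -> R) : Prop :=
  exists N : nat, (1 <= N)%nat /\
  forall (A : H -> Prop) (Bf : (H -> Prop) -> Prop),
    bounded d A ->
    (forall B, Bf B -> is_cball d B) ->
    (forall a, A a -> exists r, 0 < r /\ Bf (cball d a r)) ->
    exists F : (H -> Prop) -> Prop,
      (forall B, F B -> Bf B) /\
      (forall a, A a -> exists B, F B /\ B a) /\
      (forall (p : H) (l : list (H -> Prop)),
         NoDup l -> (forall B, In B l -> F B /\ B p) -> (length l <= N)%nat).

(** A single point may lie on the boundary of infinitely many balls whose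
    centres avoid every other ball of the family.  For [dinf] take
    [x_0 = 2], [x_(k+1) = x_k^2 + 1], centres [p_k = (x_k, 1, (x_k^2+1)/4)]
    and radii [r_k = sqrt (x_k^2+1)]: every ball [B(p_k, r_k)] passes through
    the origin, while the fast growth of [x_k] puts the vertical component of
    [p_m^-1 p_k] out of reach of [r_m].  To cover [p_0, ..., p_N] with balls
    of this family one needs all [N+1] of them, and they overlap at the
    origin, so no multiplicity bound [N] can hold. *)
From Pilot Require Import Defs.
From Stdlib Require Import Reals List.
From Stdlib Require Import Lra Lia Psatz FinFun.
Open Scope R_scope.

Section SeparatedBalls.

Variables (d : H -> H -> R) (c : nat -> H) (r : nat -> R) (o : H).

Hypothesis r_pos : forall k, 0 < r k.
Hypothesis center_in_ball : forall k, d (c k) (c k) <= r k.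
Hypothesis center_notin_other_ball : forall k m, k <> m -> r m < d (c m) (c k).
Hypothesis common_point : forall k, d (c k) o <= r k.
(* [Defs.] is needed: [Reals] also exports a [bounded], on subsets of [R]. *)
Hypothesis centers_bounded :
  forall N, Defs.bounded d (fun q => exists k, (k <= N)%nat /\ q = c k).

Let ball k := cball d (c k) (r k).

Lemma ball_injective : Injective ball.
Proof.
  intros k m Ekm; destruct (Nat.eq_dec k m) as [|Hkm]; [easy | exfalso].
  assert (Hk : ball m (c k)) by (rewrite <- Ekm; apply center_in_ball).
  unfold ball, cball in Hk; specialize (center_notin_other_ball k m Hkm); lra.
Qed.

Theorem not_BCP_of_separated_balls : ~ BCP d.
Proof.
  intros [N [_ HBCP]].
  destruct (HBCP (fun q => exists k, (k <= N)%nat /\ q = c k)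
                 (fun B => exists k, (k <= N)%nat /\ B = ball k))
    as [F [F_sub [F_cover F_mult]]].
  - apply centers_bounded.
  - intros B [k [_ ->]]; exists (c k), (r k); auto.
  - intros a [k [Hk ->]]; exists (r k); split; [apply r_pos | exists k; auto].
  - assert (F_all : forall k, (k <= N)%nat -> F (ball k)).
    { intros k Hk.
      destruct (F_cover (c k)) as [B [FB Bk]]; [exists k; auto|].
      destruct (F_sub B FB) as [m [_ ->]].
      destruct (Nat.eq_dec m k) as [->|Hmk]; [exact FB | exfalso].
      unfold ball, cball in Bk.
      specialize (center_notin_other_ball k m (not_eq_sym Hmk)); lra. }
    pose proof (F_mult o (map ball (seq 0 (S N)))) as Hlen.
    rewrite length_map, length_seq in Hlen.
    enough (S N <= N)%nat by lia.
    apply Hlen.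
    + apply Injective_map_NoDup; [apply ball_injective | apply seq_NoDup].
    + intros B HB; apply in_map_iff in HB; destruct HB as [k [<- Hk]].
      apply in_seq in Hk; split; [apply F_all; lia | apply common_point].
Qed.

End SeparatedBalls.

Lemma two_mul_sqrt (y : R) : 0 <= y -> 2 * sqrt y = sqrt (4 * y).
Proof.
  intro Hy; rewrite sqrt_mult by lra.
  replace 4 with (2 * 2) by lra; rewrite sqrt_square by lra; reflexivity.
Qed.

Lemma boxnorm_le_sqrt (a b z s : R) :
  a ^ 2 + b ^ 2 <= s -> 4 * Rabs z <= s -> boxnorm (a, b, z) <= sqrt s.
Proof.
  intros Hab Hz; unfold boxnorm; apply Rmax_lub.
  - apply sqrt_le_1_alt; lra.
  - rewrite two_mul_sqrt by apply Rabs_pos; apply sqrt_le_1_alt; lra.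
Qed.

Lemma sqrt_lt_boxnorm (a b z s : R) :
  0 <= s -> s < 4 * Rabs z -> sqrt s < boxnorm (a, b, z).
Proof.
  intros Hs Hz; unfold boxnorm; eapply Rlt_le_trans; [|apply Rmax_r].
  rewrite two_mul_sqrt by apply Rabs_pos; apply sqrt_lt_1_alt; lra.
Qed.

Fixpoint tower (n : nat) : R :=
  match n with O => 2 | S k => tower k ^ 2 + 1 end.

Definition tower_pt (k : nat) : H := (tower k, 1, (tower k ^ 2 + 1) / 4).
Definition tower_rad (k : nat) : R := sqrt (tower k ^ 2 + 1).

Lemma tower_ge2 (n : nat) : 2 <= tower n.
Proof. induction n; simpl; nra. Qed.

Lemma tower_le {k m : nat} : (k <= m)%nat -> tower k <= tower m.
Proof. induction 1; [lra | simpl; pose proof (tower_ge2 m); nra]. Qed.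

Lemma tower_sq_lt {k m : nat} : (k < m)%nat -> tower k ^ 2 + 1 <= tower m.
Proof. exact (@tower_le (S k) m). Qed.

Lemma tower_rad_pos (k : nat) : 0 < tower_rad k.
Proof. apply sqrt_lt_R0; nra. Qed.

Lemma dinf_tower_pt (m k : nat) :
  dinf (tower_pt m) (tower_pt k) =
  boxnorm (tower k - tower m, 0,
           (tower k - tower m) * (tower k + tower m + 2) / 4).
Proof.
  unfold dinf, tower_pt; cbn [hmul hinv]; f_equal.
  apply (f_equal2 pair); [apply (f_equal2 pair) |]; [ring | ring | field].
Qed.

Lemma dinf_tower_pt_self (k : nat) : dinf (tower_pt k) (tower_pt k) <= tower_rad k.
Proof.
  rewrite dinf_tower_pt; apply boxnorm_le_sqrt.
  - nra.
  - replace ((tower k - tower k) * (tower k + tower k + 2) / 4) with 0 by field.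
    rewrite Rabs_R0; nra.
Qed.

Lemma tower_rad_lt_dinf (k m : nat) :
  k <> m -> tower_rad m < dinf (tower_pt m) (tower_pt k).
Proof.
  intro Hkm; rewrite dinf_tower_pt; apply sqrt_lt_boxnorm; [nra|].
  pose proof (tower_ge2 k); pose proof (tower_ge2 m).
  destruct (Nat.lt_gt_cases k m) as [[Hlt|Hgt] _]; [exact Hkm | |].
  - pose proof (tower_sq_lt Hlt); rewrite Rabs_left; nra.
  - pose proof (tower_sq_lt Hgt); rewrite Rabs_right; nra.
Qed.

Lemma dinf_tower_pt_origin (k : nat) : dinf (tower_pt k) (0, 0, 0) <= tower_rad k.
Proof.
  unfold dinf, tower_pt; cbn [hmul hinv]; apply boxnorm_le_sqrt.
  - nra.
  - rewrite Rabs_left1; [nra | pose proof (tower_ge2 k); nra].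
Qed.

Lemma tower_pts_bounded (N : nat) :
  Defs.bounded dinf (fun q => exists k, (k <= N)%nat /\ q = tower_pt k).
Proof.
  exists (0, 0, 0), (tower_rad N); intros a [k [Hk ->]].
  pose proof (tower_le Hk); pose proof (tower_ge2 k).
  unfold dinf, tower_pt; cbn [hmul hinv]; apply boxnorm_le_sqrt.
  - nra.
  - rewrite Rabs_right; nra.
Qed.

Theorem mainTheorem5 : ~ BCP dinf.
Proof.
  apply (@not_BCP_of_separated_balls dinf tower_pt tower_rad (0, 0, 0)).
  - exact tower_rad_pos.
  - exact dinf_tower_pt_self.
  - exact tower_rad_lt_dinf.
  - exact dinf_tower_pt_origin.
  - exact tower_pts_bounded.
Qed.
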